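(* Let $(A,\alpha_A)$ be a Hom-algebra and $(H,\alpha_H)$ a Hom-coalgebra (finite-dimensional, with bijective structure maps). Let $\varphi:{A^*}^{cop}\otimes H\to H\otimes{A^*}^{cop}$, $\varphi(f\otimes h)=\sum h^\varphi\otimes f^\varphi$, and $\Phi:H\otimes A\to A\otimes H$, $\Phi(h\otimes a)=\sum a_\Phi\otimes h^\Phi$, be linear maps corresponding to each other via $\sum f(a_\Phi)h^\Phi=\sum f^\varphi(a)h^\varphi$ for all $f\in A^*$, $a\in A$, $h\in H$ (this is a bijection between such linear maps). Then $\varphi$ is a Hom-cotwistor if and only if $(\alpha_A\otimes\alpha_H)\circ\Phi=\Phi\circ(\alpha_H\otimes\alpha_A)$ and, for all $a,b\in A$, $h\in H$: (E1) $(m_A\otimes\alpha_H)\big((\mathrm{id}_A\otimes\Phi)(\Phi\otimes\mathrm{id}_A)(h\otimes a\otimes b)\big)=\Phi(\alpha_H(h)\otimes ab)$, i.e. $\sum a_\Phi b_\Psi\otimes\alpha_H((h^\Phi)^\Psi)=\sum(ab)_\Phi\otimes\alpha_H(h)^\Phi$; (E2) $(\Phi\otimes\mathrm{id}_H)(\mathrm{id}_H\otimes\Phi)(\Delta_H(h)\otimes\alpha_A(a))=(\alpha_A\otimes\Delta_H)(\Phi(h\otimes a))$; (E3) $(\mathrm{id}_A\otimes\varepsilon_H)(\Phi(h\otimes a))=\varepsilon_H(h)a$; (E4) $\Phi(h\otimes1_A)=1_A\otimes h$.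
   Context: $\Bbbk$ field of characteristic $0$; vector spaces finite-dimensional. Hom-algebra $(A,\mu,1_A,\alpha_A)$: $\alpha_A(a)(bc)=(ab)\alpha_A(c)$, $\alpha_A(1_A)=1_A$, $1_Aa=a1_A=\alpha_A(a)$; $m_A$ denotes multiplication. Hom-coalgebra $(C,\alpha,\Delta,\varepsilon)$: $\varepsilon\alpha=\varepsilon$, $\alpha(c_1)\otimes\Delta(c_2)=\Delta(c_1)\otimes\alpha(c_2)$, $\varepsilon(c_1)c_2=c_1\varepsilon(c_2)=\alpha(c)$. ${A^*}^{cop}$ is the Hom-coalgebra on $A^*$ with $\overline\varepsilon(f)=f(1_A)$, $\overline\Delta(f)\in A^*\otimes A^*\cong(A\otimes A)^*$ given by $\overline\Delta(f)(x\otimes y)=f(\alpha_A^{-2}(yx))$, and $\alpha_{{A^*}^{cop}}(f)=f\circ\alpha_A^{-1}$. For Hom-coalgebras $B,H$, a Hom-cotwistor is a linear $\varphi:B\otimes H\to H\otimes B$ with $\varphi\circ(\alpha_B\otimes\alpha_H)=(\alpha_H\otimes\alpha_B)\circ\varphi$ and (M1) $((\varphi\otimes\mathrm{id}_B)(\mathrm{id}_B\otimes\varphi))(\Delta_B(b)\otimes\alpha_H(h))=(\alpha_H\otimes\Delta_B)\varphi(b\otimes h)$; (M2) $((\mathrm{id}_H\otimes\varphi)(\varphi\otimes\mathrm{id}_H))(\alpha_B(b)\otimes\Delta_H(h))=(\Delta_H\otimes\alpha_B)\varphi(b\otimes h)$; (M3) $(\varepsilon_H\otimes\mathrm{id})\varphi(b\otimes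 h)=\varepsilon_H(h)b$; (M4) $(\mathrm{id}\otimes\varepsilon_B)\varphi(b\otimes h)=\varepsilon_B(b)h$ (here $B={A^*}^{cop}$). *)

(* Finite-dimensional K-vector spaces are modelled in
   coordinates: a space of dimension n is 'rV[K]_n.  The tensor product of
   'rV_n and 'rV_m is 'rV_(n*m), with u (x) v := mxvec (u^T *m v), so that
   the coordinate of u (x) v at mxvec_index i j is u_i * v_j.  Linear maps
   are given either as matrices (acting on the right) or as functions;
   f (x) g is always the linear extension from basis tensors. *)
From HB Require Import structures.
From mathcomp Require Import all_boot all_order all_algebra.
Set Implicit Arguments. Unset Strict Implicit. Unset Printing Implicit Defensive.
Import Order.TTheory GRing.Theory Num.Theory.
Local Open Scope ring_scope.

Section HomTensor.
Variable K : fieldType.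
Local Notation V n := 'rV[K]_n.

Definition bvec n (i : 'I_n) : V n := delta_mx 0 i.

Definition tens n m (u : V n) (v : V m) : V (n * m) := mxvec (u^T *m v).

Definition coef2 n m (x : V (n * m)) (i : 'I_n) (j : 'I_m) : K :=
  x 0 (mxvec_index i j).

Definition mxf n p (M : 'M[K]_(n, p)) : V n -> V p := fun x => x *m M.
Definition cvfun n (e : 'cV[K]_n) : V n -> K := fun x => (x *m e) 0 0.

Definition tmap n m p q (f : V n -> V p) (g : V m -> V q) (x : V (n * m))
  : V (p * q) :=
  \sum_(i < n) \sum_(j < m) coef2 x i j *: tens (f (bvec i)) (g (bvec j)).

Definition assocL n m p (x : V (n * (m * p))) : V (n * m * p) :=
  \sum_(i < n) \sum_(j < m) \sum_(k < p)
     x 0 (mxvec_index i (mxvec_index j k)) *: tens (tens (bvec i) (bvec j)) (bvec k).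
Definition assocR n m p (x : V (n * m * p)) : V (n * (m * p)) :=
  \sum_(i < n) \sum_(j < m) \sum_(k < p)
     x 0 (mxvec_index (mxvec_index i j) k) *: tens (bvec i) (tens (bvec j) (bvec k)).

Definition lcontract n m (e : V n -> K) (x : V (n * m)) : V m :=
  \sum_(i < n) \sum_(j < m) (coef2 x i j * e (bvec i)) *: bvec j.
Definition rcontract n m (e : V m -> K) (x : V (n * m)) : V n :=
  \sum_(i < n) \sum_(j < m) (coef2 x i j * e (bvec j)) *: bvec i.

Definition hmul n (mu : 'M[K]_(n * n, n)) (a b : V n) : V n := tens a b *m mu.

Definition is_hom_algebra n (mu : 'M[K]_(n * n, n)) (one : V n) (alpha : 'M[K]_n) :=
  [/\ forall a b c : V n,
        hmul mu (a *m alpha) (hmul mu b c) = hmul mu (hmul mu a b) (c *m alpha),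
      one *m alpha = one &
      forall a : V n, hmul mu one a = a *m alpha /\ hmul mu a one = a *m alpha].

Definition is_hom_coalgebra m (alpha : V m -> V m) (Delta : V m -> V (m * m))
    (eps : V m -> K) :=
  [/\ forall c, eps (alpha c) = eps c,
      forall c, assocL (tmap alpha Delta (Delta c)) = tmap Delta alpha (Delta c),
      forall c, lcontract eps (Delta c) = alpha c &
      forall c, rcontract eps (Delta c) = alpha c].

(* Dual space of A = V n via the dual basis: f(a) = sum_i f_i a_i.
   A-star (x) A-star = V (n*n) is identified with the dual of A (x) A accordingly. *)
Definition evd n (f a : V n) : K := \sum_(i < n) f 0 i * a 0 i.

Definition dual_alpha n (alpha : 'M[K]_n) (f : V n) : V n :=
  \row_i evd f (bvec i *m invmx alpha).
Definition dual_Delta n (mu : 'M[K]_(n * n, n)) (alpha : 'M[K]_n) (f : V n)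
  : V (n * n) :=                   (* Delta(f)(x (x) y) = f(alpha^-2(y x)) *)
  mxvec (\matrix_(i, j) evd f (hmul mu (bvec j) (bvec i) *m invmx alpha *m invmx alpha)).
Definition dual_eps n (one : V n) (f : V n) : K := evd f one.

Definition is_hom_cotwistor nb m (alphaB : V nb -> V nb) (DeltaB : V nb -> V (nb * nb))
    (epsB : V nb -> K) (alphaH : V m -> V m) (DeltaH : V m -> V (m * m))
    (epsH : V m -> K) (phi : V (nb * m) -> V (m * nb)) :=
  [/\ forall x, phi (tmap alphaB alphaH x) = tmap alphaH alphaB (phi x),
      forall b h, tmap phi (@id (V nb))
                    (assocL (tmap (@id (V nb)) phi (assocR (tens (DeltaB b) (alphaH h)))))
                  = assocL (tmap alphaH DeltaB (phi (tens b h))),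
      forall b h, assocL (tmap (@id (V m)) phi
                    (assocR (tmap phi (@id (V m)) (assocL (tens (alphaB b) (DeltaH h))))))
                  = tmap DeltaH alphaB (phi (tens b h)),
      forall b h, lcontract epsH (phi (tens b h)) = epsH h *: b &
      forall b h, rcontract epsB (phi (tens b h)) = epsB b *: h].

End HomTensor.

(* In coordinates every map involved is a matrix, and the hypothesis relating
   [Phi] and [phi] says exactly that [phi] is [Phi] with its A-leg transposed
   ([legtr Phi] below).  Each condition on [Phi] is then a matrix identity, and
   transposing the A-legs turns it into the corresponding cotwistor axiom on
   [phi], because the structure maps of the dual A*cop are transposes of those of A
   twisted by alpha_A^-1 (for alpha) and by alpha_A^-2 and the flip (for Delta).
   The factor alpha_A^-2 is moved across [Phi] using the compatibility of [Phi]
   with the alphas. *)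

From Pilot Require Import Defs.
From HB Require Import structures.
From mathcomp Require Import all_boot all_order all_algebra ring.
Set Implicit Arguments. Unset Strict Implicit. Unset Printing Implicit Defensive.
Import GRing.Theory.
Local Open Scope ring_scope.

Section Coordinates.
Variable K : fieldType.
Local Notation V n := 'rV[K]_n.
Local Notation bvec := (bvec K).

Lemma bvecE n (i j : 'I_n) : bvec i 0 j = (i == j)%:R.
Proof. by rewrite /Defs.bvec mxE eqxx eq_sym. Qed.

Lemma bvec_mulmx n p (i : 'I_n) (M : 'M[K]_(n, p)) j : (bvec i *m M) 0 j = M i j.
Proof. by rewrite /Defs.bvec -rowE mxE. Qed.

Lemma entry_bvec n p (M : 'M[K]_(n, p)) i j : M i j = (bvec i *m M) 0 j.
Proof. by rewrite bvec_mulmx. Qed.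

Lemma sum_delta_l n (F : 'I_n -> K) i : \sum_j (i == j)%:R * F j = F i.
Proof.
rewrite (bigD1 i) //= eqxx mul1r big1 ?addr0 // => j /negbTE ji.
by rewrite eq_sym ji mul0r.
Qed.

Lemma sum_delta_r n (F : 'I_n -> K) i : \sum_j F j * (j == i)%:R = F i.
Proof.
by rewrite -[RHS](sum_delta_l F); apply: eq_bigr => j _; rewrite mulrC eq_sym.
Qed.

Lemma sum_delta_lC n (F : 'I_n -> K) i : \sum_j (j == i)%:R * F j = F i.
Proof. by rewrite -[RHS](sum_delta_l F); apply: eq_bigr => j _; rewrite eq_sym. Qed.

Lemma sum_delta_rC n (F : 'I_n -> K) i : \sum_j F j * (i == j)%:R = F i.
Proof. by rewrite -[RHS](sum_delta_r F); apply: eq_bigr => j _; rewrite eq_sym. Qed.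

Lemma sum_id_l n (F : 'I_n -> K) i : \sum_j (1%:M : 'M[K]_n) i j * F j = F i.
Proof. by rewrite -[RHS](sum_delta_l F); apply: eq_bigr => j _; rewrite mxE. Qed.

Lemma sum_id_r n (F : 'I_n -> K) i : \sum_j F j * (1%:M : 'M[K]_n) j i = F i.
Proof. by rewrite -[RHS](sum_delta_r F); apply: eq_bigr => j _; rewrite mxE. Qed.

Lemma sum2_delta n m (F : 'I_n -> 'I_m -> K) i0 j0 :
  \sum_i \sum_j F i j * ((i == i0)%:R * (j == j0)%:R) = F i0 j0.
Proof.
transitivity (\sum_i (i == i0)%:R * \sum_j F i j * (j == j0)%:R).
  apply: eq_bigr => i _; rewrite mulr_sumr; apply: eq_bigr => j _.
  by rewrite mulrCA mulrA.
by rewrite sum_delta_lC sum_delta_r.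
Qed.

Lemma big_mxvec_index n m (F : 'I_(n * m) -> K) :
  \sum_I F I = \sum_i \sum_j F (mxvec_index i j).
Proof.
rewrite pair_big /= (reindex (uncurry (@mxvec_index n m))) /=.
  by apply: eq_bigr => -[i j].
exact: curry_mxvec_bij.
Qed.

Lemma coef2_tens n m (u : V n) (v : V m) i j : coef2 (tens u v) i j = u 0 i * v 0 j.
Proof. by rewrite /coef2 /tens mxvecE mxE big_ord1 mxE. Qed.

Lemma tens_bvec n m (i : 'I_n) (j : 'I_m) :
  tens (bvec i) (bvec j) = bvec (mxvec_index i j).
Proof. by rewrite /tens /bvec trmx_delta mul_delta_mx mxvec_delta. Qed.

Lemma coef2_bvec n m (i i0 : 'I_n) (j j0 : 'I_m) :
  coef2 (bvec (mxvec_index i j)) i0 j0 = (i == i0)%:R * (j == j0)%:R.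
Proof. by rewrite -tens_bvec coef2_tens !bvecE. Qed.

Lemma eq_mxvec_index n m (i i0 : 'I_n) (j j0 : 'I_m) :
  (mxvec_index i j == mxvec_index i0 j0)%:R = (i == i0)%:R * (j == j0)%:R :> K.
Proof. by rewrite -coef2_bvec /coef2 bvecE. Qed.

Lemma coef2_inj n m (x y : V (n * m)) :
  (forall i j, coef2 x i j = coef2 y i j) -> x = y.
Proof. by move=> H; apply/rowP => k; case/mxvec_indexP: k => i j; exact: H. Qed.

Lemma coef2_tmap n m p q (f : V n -> V p) (g : V m -> V q) x i j :
  coef2 (tmap f g x) i j
  = \sum_a \sum_b coef2 x a b * ((f (bvec a)) 0 i * (g (bvec b)) 0 j).
Proof.
rewrite /tmap {1}/coef2 summxE; apply: eq_bigr => a _.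
rewrite summxE; apply: eq_bigr => b _.
by rewrite mxE -/(coef2 _ i j) coef2_tens.
Qed.

Lemma tmap_ext n m p q (f f' : V n -> V p) (g g' : V m -> V q) x :
  (forall i, f (bvec i) = f' (bvec i)) -> (forall j, g (bvec j) = g' (bvec j)) ->
  tmap f g x = tmap f' g' x.
Proof.
by move=> Hf Hg; apply: eq_bigr => i _; apply: eq_bigr => j _; rewrite Hf Hg.
Qed.

Lemma tmap_tens n m p q (A : 'M[K]_(n, p)) (B : 'M[K]_(m, q)) u v :
  tmap (mxf A) (mxf B) (tens u v) = tens (u *m A) (v *m B).
Proof.
apply: coef2_inj => i j; rewrite coef2_tmap coef2_tens !mxE big_distrl /=.
apply: eq_bigr => a _; rewrite big_distrr /=; apply: eq_bigr => b _.
by rewrite coef2_tens /mxf !bvec_mulmx mulrACA.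
Qed.

Lemma coef2_assocL n m p (x : V (n * (m * p))) i j k :
  coef2 (assocL x) (mxvec_index i j) k = coef2 x i (mxvec_index j k).
Proof.
rewrite /assocL {1}/coef2 summxE.
transitivity (\sum_i' \sum_j'
   (\sum_k' x 0 (mxvec_index i' (mxvec_index j' k')) * (k' == k)%:R)
   * ((i' == i)%:R * (j' == j)%:R)); last by rewrite sum2_delta sum_delta_r.
apply: eq_bigr => i' _; rewrite summxE; apply: eq_bigr => j' _.
rewrite big_distrl /= summxE; apply: eq_bigr => k' _.
rewrite mxE !tens_bvec -/(coef2 _ (mxvec_index i j) k) coef2_bvec eq_mxvec_index.
by rewrite [RHS]mulrAC mulrA.
Qed.

Lemma coef2_assocR n m p (x : V (n * m * p)) i j k :
  coef2 (assocR x) i (mxvec_index j k) = coef2 x (mxvec_index i j) k.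
Proof.
rewrite /assocR {1}/coef2 summxE.
transitivity (\sum_i' \sum_j'
   (\sum_k' x 0 (mxvec_index (mxvec_index i' j') k') * (k' == k)%:R)
   * ((i' == i)%:R * (j' == j)%:R)); last by rewrite sum2_delta sum_delta_r.
apply: eq_bigr => i' _; rewrite summxE; apply: eq_bigr => j' _.
rewrite big_distrl /= summxE; apply: eq_bigr => k' _.
rewrite mxE !tens_bvec -/(coef2 _ i (mxvec_index j k)) coef2_bvec eq_mxvec_index.
by rewrite [RHS]mulrAC !mulrA.
Qed.

Lemma assocL_tens n m p (u : V n) (v : V m) (w : V p) :
  assocL (tens u (tens v w)) = tens (tens u v) w.
Proof.
apply: coef2_inj => I k; case/mxvec_indexP: I => i j.
rewrite coef2_assocL !coef2_tens -[tens v w 0 _]/(coef2 _ j k).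
by rewrite -[tens u v 0 _]/(coef2 _ i j) !coef2_tens mulrA.
Qed.

Lemma assocR_tens n m p (u : V n) (v : V m) (w : V p) :
  assocR (tens (tens u v) w) = tens u (tens v w).
Proof.
apply: coef2_inj => i J; case/mxvec_indexP: J => j k.
rewrite coef2_assocR !coef2_tens -[tens v w 0 _]/(coef2 _ j k).
by rewrite -[tens u v 0 _]/(coef2 _ i j) !coef2_tens mulrA.
Qed.

Lemma tmap_is_linear n m p q (f : V n -> V p) (g : V m -> V q) : linear (tmap f g).
Proof.
move=> c x y; rewrite /tmap scaler_sumr -big_split; apply: eq_bigr => i _.
rewrite scaler_sumr -big_split; apply: eq_bigr => j _.
by rewrite /coef2 !mxE scalerDl scalerA.
Qed.
HB.instance Definition _ n m p q f g :=
  GRing.isLinear.Build K (V (n * m)) (V (p * q)) *:%R (@tmap K n m p q f g)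
    (@tmap_is_linear n m p q f g).

Lemma assocL_is_linear n m p : linear (@assocL K n m p).
Proof.
move=> c x y; rewrite /assocL scaler_sumr -big_split; apply: eq_bigr => i _.
rewrite scaler_sumr -big_split; apply: eq_bigr => j _.
rewrite scaler_sumr -big_split; apply: eq_bigr => k _.
by rewrite !mxE scalerDl scalerA.
Qed.
HB.instance Definition _ n m p :=
  GRing.isLinear.Build K (V (n * (m * p))) (V (n * m * p)) *:%R (@assocL K n m p)
    (@assocL_is_linear n m p).

Lemma assocR_is_linear n m p : linear (@assocR K n m p).
Proof.
move=> c x y; rewrite /assocR scaler_sumr -big_split; apply: eq_bigr => i _.
rewrite scaler_sumr -big_split; apply: eq_bigr => j _.
rewrite scaler_sumr -big_split; apply: eq_bigr => k _.
by rewrite !mxE scalerDl scalerA.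
Qed.
HB.instance Definition _ n m p :=
  GRing.isLinear.Build K (V (n * m * p)) (V (n * (m * p))) *:%R (@assocR K n m p)
    (@assocR_is_linear n m p).

Lemma lcontract_is_linear n m (e : V n -> K) : linear (@lcontract K n m e).
Proof.
move=> c x y; rewrite /lcontract scaler_sumr -big_split; apply: eq_bigr => i _.
rewrite scaler_sumr -big_split; apply: eq_bigr => j _.
by rewrite /coef2 !mxE mulrDl scalerDl scalerA mulrA.
Qed.
HB.instance Definition _ n m e :=
  GRing.isLinear.Build K (V (n * m)) (V m) *:%R (@lcontract K n m e)
    (@lcontract_is_linear n m e).

Lemma rcontract_is_linear n m (e : V m -> K) : linear (@rcontract K n m e).
Proof.
move=> c x y; rewrite /rcontract scaler_sumr -big_split; apply: eq_bigr => i _.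
rewrite scaler_sumr -big_split; apply: eq_bigr => j _.
by rewrite /coef2 !mxE mulrDl scalerDl scalerA mulrA.
Qed.
HB.instance Definition _ n m e :=
  GRing.isLinear.Build K (V (n * m)) (V n) *:%R (@rcontract K n m e)
    (@rcontract_is_linear n m e).

Definition tensl m n (v : V m) (u : V n) := tens u v.

Lemma tensl_is_linear m n (v : V m) : linear (@tensl m n v).
Proof. by move=> c x y; rewrite /tensl /tens linearP mulmxDl -scalemxAl linearP. Qed.
HB.instance Definition _ m n v :=
  GRing.isLinear.Build K (V n) (V (n * m)) *:%R (@tensl m n v) (@tensl_is_linear m n v).

Lemma tens_is_linear m n (u : V n) : linear (@tens K n m u).
Proof. by move=> c x y; rewrite /tens mulmxDr -scalemxAr linearP. Qed.
HB.instance Definition _ m n u :=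
  GRing.isLinear.Build K (V m) (V (n * m)) *:%R (@tens K n m u) (@tens_is_linear m n u).

Lemma lcontractE n m (e : V n -> K) (x : V (n * m)) j0 :
  lcontract e x 0 j0 = \sum_i coef2 x i j0 * e (bvec i).
Proof.
rewrite /lcontract summxE; apply: eq_bigr => i _; rewrite summxE.
rewrite (eq_bigr (fun j => coef2 x i j * e (bvec i) * (j == j0)%:R)) ?sum_delta_r //.
by move=> j _; rewrite !mxE eqxx eq_sym.
Qed.

Lemma rcontractE n m (e : V m -> K) (x : V (n * m)) i0 :
  rcontract e x 0 i0 = \sum_j coef2 x i0 j * e (bvec j).
Proof.
rewrite /rcontract summxE.
rewrite (eq_bigr (fun i => (\sum_j coef2 x i j * e (bvec j)) * (i == i0)%:R)) ?sum_delta_r //.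
move=> i _; rewrite summxE big_distrl; apply: eq_bigr => j _.
by rewrite !mxE eqxx eq_sym.
Qed.

Definition expands_on_basis n (e : V n -> K) := forall u, e u = \sum_i u 0 i * e (bvec i).

Lemma lcontract_tens n m (e : V n -> K) (u : V n) (v : V m) :
  expands_on_basis e -> lcontract e (tens u v) = e u *: v.
Proof.
move=> eE; apply/rowP => j; rewrite lcontractE eE mxE big_distrl /=.
by apply: eq_bigr => i _; rewrite coef2_tens mulrAC.
Qed.

Lemma rcontract_tens n m (e : V m -> K) (u : V n) (v : V m) :
  expands_on_basis e -> rcontract e (tens u v) = e v *: u.
Proof.
move=> eE; apply/rowP => i; rewrite rcontractE eE mxE big_distrl /=.
by apply: eq_bigr => j _; rewrite coef2_tens -mulrA mulrC.
Qed.

Lemma evd_bvec_l n (k : 'I_n) (y : V n) : evd (bvec k) y = y 0 k.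
Proof. by rewrite -[RHS](sum_delta_l (fun i => y 0 i)); apply: eq_bigr => i _; rewrite bvecE. Qed.

Lemma evd_bvec_r n (k : 'I_n) (f : V n) : evd f (bvec k) = f 0 k.
Proof. by rewrite -[RHS](sum_delta_rC (fun i => f 0 i)); apply: eq_bigr => i _; rewrite bvecE. Qed.

Lemma cvfun_expands n (c : 'cV[K]_n) : expands_on_basis (cvfun c).
Proof. by move=> u; rewrite /cvfun mxE; apply: eq_bigr => i _; rewrite bvec_mulmx. Qed.

Lemma evd_expands_l n (a : V n) : expands_on_basis (fun f => evd f a).
Proof. by move=> u; apply: eq_bigr => i _; rewrite evd_bvec_l. Qed.

End Coordinates.

Section MatrixForms.
Variable K : fieldType.
Local Notation V n := 'rV[K]_n.
Local Notation bvec := (bvec K).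
Local Notation "''M_' ( a , b )" := 'M[K]_(a, b) : type_scope.

Definition kronmx n m p q (A : 'M_(n, p)) (B : 'M_(m, q)) : 'M_(n * m, p * q) :=
  lin1_mx (tmap (mxf A) (mxf B)).
Definition assocL_mx n m p : 'M_(n * (m * p), n * m * p) := lin1_mx (@assocL K n m p).
Definition assocR_mx n m p : 'M_(n * m * p, n * (m * p)) := lin1_mx (@assocR K n m p).
Definition lcontract_mx n m (e : V n -> K) : 'M_(n * m, m) := lin1_mx (@lcontract K n m e).
Definition rcontract_mx n m (e : V m -> K) : 'M_(n * m, n) := lin1_mx (@rcontract K n m e).
Definition tensl_mx m n (v : V n) : 'M_(m, m * n) := lin1_mx (@tensl K n m v).
Definition tensr_mx m n (u : V n) : 'M_(m, n * m) := lin1_mx (@tens K n m u).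

Lemma tmap_kronmx n m p q (A : 'M_(n, p)) (B : 'M_(m, q)) x :
  tmap (mxf A) (mxf B) x = x *m kronmx A B.
Proof. by rewrite mul_rV_lin1. Qed.

Lemma assocL_mulmx n m p (x : V (n * (m * p))) : assocL x = x *m assocL_mx n m p.
Proof. by rewrite mul_rV_lin1. Qed.

Lemma assocR_mulmx n m p (x : V (n * m * p)) : assocR x = x *m assocR_mx n m p.
Proof. by rewrite mul_rV_lin1. Qed.

Lemma lcontract_mulmx n m (e : V n -> K) (x : V (n * m)) :
  lcontract e x = x *m lcontract_mx m e.
Proof. by rewrite mul_rV_lin1. Qed.

Lemma rcontract_mulmx n m (e : V m -> K) (x : V (n * m)) :
  rcontract e x = x *m rcontract_mx n e.
Proof. by rewrite mul_rV_lin1. Qed.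

Lemma tensl_mulmx m n (v : V n) (u : V m) : tens u v = u *m tensl_mx m v.
Proof. by rewrite mul_rV_lin1. Qed.

Lemma tensr_mulmx m n (v : V m) (u : V n) : tens u v = v *m tensr_mx m u.
Proof. by rewrite mul_rV_lin1. Qed.

Lemma tmap_idl n m q (g : V m -> V q) x : tmap (@id (V n)) g x = tmap (mxf 1%:M) g x.
Proof. by apply: tmap_ext => // i; rewrite /mxf mulmx1. Qed.

Lemma tmap_idr n m p (f : V n -> V p) x : tmap f (@id (V m)) x = tmap f (mxf 1%:M) x.
Proof. by apply: tmap_ext => // i; rewrite /mxf mulmx1. Qed.

Lemma tens_mulmx n m p q (A : 'M_(n, p)) (B : 'M_(m, q)) u v :
  tens (u *m A) (v *m B) = tens u v *m kronmx A B.
Proof. by rewrite -tmap_kronmx tmap_tens. Qed.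

Lemma rV_mulmxP n p (X Y : 'M_(n, p)) : (forall x : V n, x *m X = x *m Y) <-> X = Y.
Proof. by split=> [H|-> //]; apply/row_matrixP => i; rewrite !rowE H. Qed.

Lemma tens_bvec_mulmx_inj n m p (X Y : 'M_(n * m, p)) :
  (forall i j, tens (bvec i) (bvec j) *m X = tens (bvec i) (bvec j) *m Y) -> X = Y.
Proof.
move=> H; apply/row_matrixP => k; rewrite !rowE; case/mxvec_indexP: k => i j.
by have := H i j; rewrite tens_bvec.
Qed.

Lemma tens_mulmxP n m p (X Y : 'M_(n * m, p)) :
  (forall u v, tens u v *m X = tens u v *m Y) <-> X = Y.
Proof. by split=> [H|-> //]; apply: tens_bvec_mulmx_inj. Qed.

Lemma tens3l_mulmxP n m q p (X Y : 'M_(n * m * q, p)) :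
  (forall u v w, tens (tens u v) w *m X = tens (tens u v) w *m Y) <-> X = Y.
Proof.
split=> [H|-> //]; apply: tens_bvec_mulmx_inj => I k; case/mxvec_indexP: I => i j.
by rewrite -tens_bvec H.
Qed.

Lemma tens3r_bvec_mulmx_inj n m q p (X Y : 'M_(n * (m * q), p)) :
  (forall i j k, tens (bvec i) (tens (bvec j) (bvec k)) *m X
               = tens (bvec i) (tens (bvec j) (bvec k)) *m Y) -> X = Y.
Proof.
move=> H; apply: tens_bvec_mulmx_inj => i J; case/mxvec_indexP: J => j k.
by rewrite -tens_bvec H.
Qed.

Lemma kronmx_mul n m p q r s (A : 'M_(n, p)) (B : 'M_(m, q)) (C : 'M_(p, r)) (D : 'M_(q, s)) :
  kronmx A B *m kronmx C D = kronmx (A *m C) (B *m D).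
Proof. by apply: tens_bvec_mulmx_inj => i j; rewrite mulmxA -!tens_mulmx -!mulmxA. Qed.

Lemma kronmx1 n m : kronmx (1%:M : 'M_n) (1%:M : 'M_m) = 1%:M.
Proof. by apply: tens_bvec_mulmx_inj => i j; rewrite -tens_mulmx !mulmx1. Qed.

Lemma kronmxE n m p q (A : 'M_(n, p)) (B : 'M_(m, q)) i j k l :
  kronmx A B (mxvec_index i j) (mxvec_index k l) = A i k * B j l.
Proof.
by rewrite entry_bvec -tens_bvec -tens_mulmx -/(coef2 _ k l) coef2_tens !bvec_mulmx.
Qed.

Lemma assocL_mx_kronmx n m p n' m' p' (A : 'M_(n, n')) (B : 'M_(m, m')) (C : 'M_(p, p')) :
  assocL_mx n m p *m kronmx (kronmx A B) C = kronmx A (kronmx B C) *m assocL_mx n' m' p'.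
Proof.
apply: tens3r_bvec_mulmx_inj => i j k.
by rewrite !mulmxA -assocL_mulmx assocL_tens -!tens_mulmx -assocL_mulmx assocL_tens.
Qed.

Lemma assocR_mx_kronmx n m p n' m' p' (A : 'M_(n, n')) (B : 'M_(m, m')) (C : 'M_(p, p')) :
  assocR_mx n m p *m kronmx A (kronmx B C) = kronmx (kronmx A B) C *m assocR_mx n' m' p'.
Proof.
apply/tens3l_mulmxP => u v w.
by rewrite !mulmxA -assocR_mulmx assocR_tens -!tens_mulmx -assocR_mulmx assocR_tens.
Qed.

Lemma kron_mulmxE a b a' b' p (A : 'M_(a, a')) (B : 'M_(b, b')) (Z : 'M_(a' * b', p)) i j J :
  (kronmx A B *m Z) (mxvec_index i j) J
  = \sum_i' \sum_j' A i i' * B j j' * Z (mxvec_index i' j') J.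
Proof.
rewrite mxE (big_mxvec_index (fun I => kronmx A B (mxvec_index i j) I * Z I J)).
by apply: eq_bigr => i' _; apply: eq_bigr => j' _; rewrite kronmxE.
Qed.

Lemma mulmx_kronE a b a' b' p (A : 'M_(a, a')) (B : 'M_(b, b')) (Z : 'M_(p, a * b)) I k l :
  (Z *m kronmx A B) I (mxvec_index k l)
  = \sum_k' \sum_l' Z I (mxvec_index k' l') * (A k' k * B l' l).
Proof.
rewrite mxE (big_mxvec_index (fun J => Z I J * kronmx A B J (mxvec_index k l))).
by apply: eq_bigr => i' _; apply: eq_bigr => j' _; rewrite kronmxE.
Qed.

Lemma kron1l_mulmxE a b b' p (B : 'M_(b, b')) (Z : 'M_(a * b', p)) i j J :
  (kronmx 1%:M B *m Z) (mxvec_index i j) J = \sum_j' B j j' * Z (mxvec_index i j') J.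
Proof.
rewrite kron_mulmxE -[RHS](sum_id_l (fun i' => \sum_j' B j j' * Z (mxvec_index i' j') J)).
by apply: eq_bigr => i' _; rewrite mulr_sumr; apply: eq_bigr => j' _; rewrite mulrA.
Qed.

Lemma kron1r_mulmxE a b a' p (A : 'M_(a, a')) (Z : 'M_(a' * b, p)) i j J :
  (kronmx A 1%:M *m Z) (mxvec_index i j) J = \sum_i' A i i' * Z (mxvec_index i' j) J.
Proof.
rewrite kron_mulmxE; apply: eq_bigr => i' _.
rewrite -[RHS](sum_id_l (fun j' => A i i' * Z (mxvec_index i' j') J)).
by apply: eq_bigr => j' _; rewrite mulrCA mulrA.
Qed.

Lemma mulmx_kron1lE a b b' p (B : 'M_(b, b')) (Z : 'M_(p, a * b)) I k l :
  (Z *m kronmx 1%:M B) I (mxvec_index k l) = \sum_l' Z I (mxvec_index k l') * B l' l.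
Proof.
rewrite mulmx_kronE -[RHS](sum_id_r (fun k' => \sum_l' Z I (mxvec_index k' l') * B l' l)).
by apply: eq_bigr => k' _; rewrite big_distrl; apply: eq_bigr => l' _ /=; rewrite mulrA mulrAC.
Qed.

Lemma mulmx_kron1rE a b a' p (A : 'M_(a, a')) (Z : 'M_(p, a * b)) I k l :
  (Z *m kronmx A 1%:M) I (mxvec_index k l) = \sum_k' Z I (mxvec_index k' l) * A k' k.
Proof.
rewrite mulmx_kronE; apply: eq_bigr => k' _.
rewrite -[RHS](sum_id_r (fun l' => Z I (mxvec_index k' l') * A k' k)).
by apply: eq_bigr => l' _; rewrite mulrA.
Qed.

Lemma row_mulmx_entry m n p (Z : 'M_(m, n)) (M : 'M_(n, p)) I J :
  (Z *m M) I J = (row I Z *m M) 0 J.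
Proof. by rewrite -row_mul [RHS]mxE. Qed.

Lemma assocL_mx_mulmxE a b c p (Z : 'M_(a * b * c, p)) i j k J :
  (assocL_mx a b c *m Z) (mxvec_index i (mxvec_index j k)) J
  = Z (mxvec_index (mxvec_index i j) k) J.
Proof.
by rewrite [LHS]entry_bvec mulmxA -!tens_bvec -assocL_mulmx assocL_tens !tens_bvec bvec_mulmx.
Qed.

Lemma assocR_mx_mulmxE a b c p (Z : 'M_(a * (b * c), p)) i j k J :
  (assocR_mx a b c *m Z) (mxvec_index (mxvec_index i j) k) J
  = Z (mxvec_index i (mxvec_index j k)) J.
Proof.
by rewrite [LHS]entry_bvec mulmxA -!tens_bvec -assocR_mulmx assocR_tens !tens_bvec bvec_mulmx.
Qed.

Lemma mulmx_assocL_mxE a b c p (Z : 'M_(p, a * (b * c))) I i j k :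
  (Z *m assocL_mx a b c) I (mxvec_index (mxvec_index i j) k)
  = Z I (mxvec_index i (mxvec_index j k)).
Proof. by rewrite row_mulmx_entry -assocL_mulmx -/(coef2 _ _ k) coef2_assocL /coef2 mxE. Qed.

Lemma mulmx_lcontract_mxE a n m (e : V n -> K) (Z : 'M_(a, n * m)) I j :
  (Z *m lcontract_mx m e) I j = \sum_i Z I (mxvec_index i j) * e (bvec i).
Proof.
rewrite row_mulmx_entry -lcontract_mulmx lcontractE.
by apply: eq_bigr => i _; rewrite /coef2 mxE.
Qed.

Lemma mulmx_rcontract_mxE a n m (e : V m -> K) (Z : 'M_(a, n * m)) I i :
  (Z *m rcontract_mx n e) I i = \sum_j Z I (mxvec_index i j) * e (bvec j).
Proof.
rewrite row_mulmx_entry -rcontract_mulmx rcontractE.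
by apply: eq_bigr => j _; rewrite /coef2 mxE.
Qed.

Lemma lcontract_mxE n m (e : V n -> K) i j j0 :
  lcontract_mx m e (mxvec_index i j) j0 = e (bvec i) * (j == j0)%:R.
Proof.
rewrite entry_bvec -lcontract_mulmx lcontractE.
rewrite -[RHS](sum_delta_l (fun i' => e (bvec i') * (j == j0)%:R) i).
by apply: eq_bigr => i' _; rewrite coef2_bvec mulrAC -mulrA.
Qed.

Lemma rcontract_mxE n m (e : V m -> K) i j i0 :
  rcontract_mx n e (mxvec_index i j) i0 = e (bvec j) * (i == i0)%:R.
Proof.
rewrite entry_bvec -rcontract_mulmx rcontractE.
rewrite -[RHS](sum_delta_l (fun j' => e (bvec j') * (i == i0)%:R) j).
by apply: eq_bigr => j' _; rewrite coef2_bvec; ring.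
Qed.

Lemma tensl_mx_mulmxE m n p (v : V n) (Z : 'M_(m * n, p)) i J :
  (tensl_mx m v *m Z) i J = \sum_l v 0 l * Z (mxvec_index i l) J.
Proof.
rewrite [LHS]entry_bvec mulmxA -tensl_mulmx mxE big_mxvec_index.
rewrite -[RHS](sum_delta_l (fun i' => \sum_l v 0 l * Z (mxvec_index i' l) J)).
apply: eq_bigr => i' _; rewrite mulr_sumr; apply: eq_bigr => l _.
by rewrite -[tens _ _ 0 _]/(coef2 _ i' l) coef2_tens bvecE mulrA.
Qed.

Lemma tensr_mxE m n (u : V n) i k j : tensr_mx m u i (mxvec_index k j) = u 0 k * (i == j)%:R.
Proof. by rewrite entry_bvec -tensr_mulmx -[tens _ _ 0 _]/(coef2 _ k j) coef2_tens bvecE. Qed.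

End MatrixForms.

Section LegTranspose.
Variable K : fieldType.
Local Notation "''M_' ( a , b )" := 'M[K]_(a, b) : type_scope.

Definition mxvec_unindex n m (I : 'I_(n * m)) : 'I_n * 'I_m :=
  enum_val (cast_ord (esym (mxvec_cast n m)) I).

Lemma mxvec_indexK n m (i : 'I_n) (j : 'I_m) : mxvec_unindex (mxvec_index i j) = (i, j).
Proof. by rewrite /mxvec_unindex /mxvec_index cast_ordK enum_rankK. Qed.

Local Notation fst_ix I := (mxvec_unindex I).1.
Local Notation snd_ix I := (mxvec_unindex I).2.

(* For [Z] the matrix of a map [H (x) A -> A (x) H], [legtr Z] is the matrix of
   the map [A^* (x) H -> H (x) A^*] obtained by transposing the A-leg in the
   dual basis; [legtr_out3] and [legtr_in3] do the same for the composite maps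
   occurring in (E2)/(M2) and (E1)/(M1). *)
Definition legtr a b c d (Z : 'M_(a * b, c * d)) : 'M_(c * a, d * b) :=
  \matrix_(I, J) Z (mxvec_index (snd_ix I) (snd_ix J)) (mxvec_index (fst_ix I) (fst_ix J)).

Definition legtr_out3 a b c d e (Z : 'M_(a * b, c * d * e)) : 'M_(c * a, d * e * b) :=
  \matrix_(I, J) Z (mxvec_index (snd_ix I) (snd_ix J))
                   (mxvec_index (mxvec_index (fst_ix I) (fst_ix (fst_ix J))) (snd_ix (fst_ix J))).

Definition legtr_in3 a b c d e (Z : 'M_(a * b * c, d * e)) : 'M_(d * a, e * c * b) :=
  \matrix_(I, J) Z (mxvec_index (mxvec_index (snd_ix I) (snd_ix J)) (snd_ix (fst_ix J)))
                   (mxvec_index (fst_ix I) (fst_ix (fst_ix J))).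

Lemma legtrE a b c d (Z : 'M_(a * b, c * d)) k p j l :
  legtr Z (mxvec_index k p) (mxvec_index j l) = Z (mxvec_index p l) (mxvec_index k j).
Proof. by rewrite mxE !mxvec_indexK. Qed.

Lemma legtr_out3E a b c d e (Z : 'M_(a * b, c * d * e)) k p j j3 l :
  legtr_out3 Z (mxvec_index k p) (mxvec_index (mxvec_index j j3) l)
  = Z (mxvec_index p l) (mxvec_index (mxvec_index k j) j3).
Proof. by rewrite mxE !mxvec_indexK. Qed.

Lemma legtr_in3E a b c d e (Z : 'M_(a * b * c, d * e)) k p j l4 l3 :
  legtr_in3 Z (mxvec_index k p) (mxvec_index (mxvec_index j l4) l3)
  = Z (mxvec_index (mxvec_index p l3) l4) (mxvec_index k j).
Proof. by rewrite mxE !mxvec_indexK. Qed.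

Lemma legtr_inj a b c d : injective (@legtr a b c d).
Proof.
move=> Z1 Z2 H; apply/matrixP => I J.
case/mxvec_indexP: I => p l; case/mxvec_indexP: J => k j.
by rewrite -(legtrE Z1) -(legtrE Z2) H.
Qed.

Lemma legtr_out3_inj a b c d e : injective (@legtr_out3 a b c d e).
Proof.
move=> Z1 Z2 H; apply/matrixP => I J.
case/mxvec_indexP: I => p l; case/mxvec_indexP: J => J1 j3; case/mxvec_indexP: J1 => k j.
by rewrite -(legtr_out3E Z1) -(legtr_out3E Z2) H.
Qed.

Lemma legtr_in3_inj a b c d e : injective (@legtr_in3 a b c d e).
Proof.
move=> Z1 Z2 H; apply/matrixP => I J.
case/mxvec_indexP: I => I1 l4; case/mxvec_indexP: I1 => p l3; case/mxvec_indexP: J => k j.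
by rewrite -(legtr_in3E Z1) -(legtr_in3E Z2) H.
Qed.

Lemma legtr_kronmx_mul a b c d a' b' (B : 'M_(a', a)) (C : 'M_(b', b))
    (Z : 'M_(a * b, c * d)) :
  legtr (kronmx B C *m Z) = kronmx 1%:M B *m legtr Z *m kronmx 1%:M C^T.
Proof.
apply/matrixP => I J; case/mxvec_indexP: I => k p'; case/mxvec_indexP: J => j l'.
rewrite legtrE kron_mulmxE mulmx_kron1lE [LHS]exchange_big /=; apply: eq_bigr => l _.
rewrite kron1l_mulmxE big_distrl /=; apply: eq_bigr => p _.
by rewrite legtrE !mxE mulrAC.
Qed.

Lemma legtr_mul_kronmx a b c d c' d' (A : 'M_(c, c')) (D : 'M_(d, d'))
    (Z : 'M_(a * b, c * d)) :
  legtr (Z *m kronmx A D) = kronmx A^T 1%:M *m legtr Z *m kronmx D 1%:M.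
Proof.
apply/matrixP => I J; case/mxvec_indexP: I => k' p; case/mxvec_indexP: J => j' l.
rewrite legtrE mulmx_kronE mulmx_kron1rE [LHS]exchange_big /=; apply: eq_bigr => j _.
rewrite kron1r_mulmxE big_distrl /=; apply: eq_bigr => k _.
by rewrite legtrE !mxE mulrA [_ * A k k']mulrC.
Qed.

Lemma sum_mulr_id_r n (x : 'I_n -> K) c j0 :
  \sum_j x j * (c * (1%:M : 'M_(n, n)) j j0) = x j0 * c.
Proof.
rewrite -(sum_id_r (fun j => x j * c)).
by apply: eq_bigr => j _; rewrite mulrA.
Qed.

Lemma legtr_out3_kron1l_mul a b b' c d e (A : 'M_(b', b)) (Z : 'M_(a * b, c * d * e)) :
  legtr_out3 (kronmx 1%:M A *m Z) = legtr_out3 Z *m kronmx 1%:M A^T.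
Proof.
apply/matrixP => I J; case/mxvec_indexP: I => k p; case/mxvec_indexP: J => J1 l.
case/mxvec_indexP: J1 => j j3.
rewrite legtr_out3E kron1l_mulmxE mulmx_kron1lE; apply: eq_bigr => l' _.
by rewrite legtr_out3E mxE mulrC.
Qed.

Lemma legtr_out3_mul_kron1r a b c c' d e (B : 'M_(c, c')) (Z : 'M_(a * b, c * d * e)) :
  legtr_out3 (Z *m kronmx (kronmx B (1%:M : 'M_(d, d))) (1%:M : 'M_(e, e)))
  = kronmx B^T 1%:M *m legtr_out3 Z.
Proof.
apply/matrixP => I J; case/mxvec_indexP: I => k p; case/mxvec_indexP: J => J1 l.
case/mxvec_indexP: J1 => j j3.
rewrite legtr_out3E mulmx_kron1rE kron1r_mulmxE big_mxvec_index; apply: eq_bigr => k' _.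
under eq_bigr => j' _ do rewrite kronmxE.
by rewrite sum_mulr_id_r legtr_out3E mxE mulrC.
Qed.

Lemma kron1l_mul_legtr_in3 a a' b c d e (B : 'M_(a', a)) (Z : 'M_(a * b * c, d * e)) :
  kronmx 1%:M B *m legtr_in3 Z
  = legtr_in3 (kronmx (kronmx B (1%:M : 'M_(b, b))) (1%:M : 'M_(c, c)) *m Z).
Proof.
apply/matrixP => I J; case/mxvec_indexP: I => k p'; case/mxvec_indexP: J => J1 l3.
case/mxvec_indexP: J1 => j4 l4.
rewrite legtr_in3E kron1l_mulmxE kron1r_mulmxE big_mxvec_index; apply: eq_bigr => p _.
rewrite legtr_in3E.
rewrite -[LHS](sum_id_l (fun l => B p' p * Z (mxvec_index (mxvec_index p l) l4) _) l3).
by apply: eq_bigr => l _; rewrite kronmxE mulrCA mulrA.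
Qed.

End LegTranspose.

Section TwistIdentities.
Variable K : fieldType.
Local Notation "''M_' ( a , b )" := 'M[K]_(a, b) : type_scope.

Lemma sum2_scaled_delta n m (F : 'I_n -> 'I_m -> K) c a0 b0 :
  \sum_a \sum_b F a b * (c * (a == a0)%:R * (b == b0)%:R) = c * F a0 b0.
Proof.
rewrite -(sum2_delta (fun a b => c * F a b)).
by apply: eq_bigr => a _; apply: eq_bigr => b _; ring.
Qed.

Lemma sum2_delta_l n m (G : 'I_n -> 'I_m -> K) (H : 'I_m -> K) a0 :
  \sum_a \sum_b G a b * ((a == a0)%:R * H b) = \sum_b G a0 b * H b.
Proof.
rewrite -(sum_delta_lC (fun a => \sum_b G a b * H b)); apply: eq_bigr => a _.
by rewrite mulr_sumr; apply: eq_bigr => b _; ring.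
Qed.

Lemma assocL_mxE a b c i j k i' j' k' :
  assocL_mx K a b c (mxvec_index i (mxvec_index j k)) (mxvec_index (mxvec_index i' j') k')
  = (i == i')%:R * (j == j')%:R * (k == k')%:R.
Proof.
rewrite entry_bvec -!tens_bvec -assocL_mulmx assocL_tens !tens_bvec.
by rewrite -/(coef2 _ (mxvec_index i' j') k') coef2_bvec eq_mxvec_index.
Qed.

Lemma legtr_out3_mul_assocL a b c d e f (Z : 'M_(a * b, c * d)) (D : 'M_(d, e * f)) :
  legtr_out3 (Z *m (kronmx 1%:M D *m assocL_mx K c e f)) = legtr Z *m kronmx D 1%:M.
Proof.
apply/matrixP => I J; case/mxvec_indexP: I => k p; case/mxvec_indexP: J => J1 l.
case/mxvec_indexP: J1 => j j3.
rewrite legtr_out3E mulmxA mulmx_assocL_mxE mulmx_kron1lE mulmx_kron1rE.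
by apply: eq_bigr => k' _; rewrite legtrE.
Qed.

Variables (n m : nat) (Phi : 'M_(m * n, n * m)).
Local Notation P := (legtr Phi).

Lemma legtr_out3_twist2 (D : 'M_(m, m * m)) :
  legtr_out3 (kronmx D 1%:M *m (assocR_mx K m m n *m (kronmx 1%:M Phi
                 *m (assocL_mx K m n m *m kronmx Phi 1%:M))))
  = kronmx 1%:M D *m (assocL_mx K n m m *m (kronmx P 1%:M
                 *m (assocR_mx K m n m *m (kronmx 1%:M P *m assocL_mx K m m n)))).
Proof.
apply/matrixP => I J; case/mxvec_indexP: I => k p; case/mxvec_indexP: J => J1 l.
case/mxvec_indexP: J1 => j j3.
rewrite legtr_out3E kron1r_mulmxE kron1l_mulmxE; apply: eq_bigr => J0 _.
case/mxvec_indexP: J0 => j1 j2; congr (_ * _).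
rewrite assocR_mx_mulmxE kron1l_mulmxE assocL_mx_mulmxE kron1r_mulmxE.
transitivity (\sum_l2 Phi (mxvec_index j1 l2) (mxvec_index k j)
                      * Phi (mxvec_index j2 l) (mxvec_index l2 j3)).
  rewrite big_mxvec_index.
  under eq_bigr => k2 _ do under eq_bigr => j5 _ do rewrite assocL_mx_mulmxE kronmxE.
  under eq_bigr => k2 _ do rewrite sum_mulr_id_r.
  by apply: eq_bigr => k2 _; rewrite mulrC.
symmetry; rewrite big_mxvec_index.
under eq_bigr => j6 _ do under eq_bigr => l2 _ do
  rewrite assocR_mx_mulmxE kron1l_mulmxE big_mxvec_index.
under eq_bigr => j6 _ do under eq_bigr => l2 _ do under eq_bigr => j7 _ do
  under eq_bigr => l3 _ do rewrite assocL_mxE.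
under eq_bigr => j6 _ do under eq_bigr => l2 _ do rewrite sum2_scaled_delta.
by rewrite sum2_delta_l; apply: eq_bigr => l2 _; rewrite !legtrE.
Qed.

Variables (nu : 'M_(n * n, n)) (D : 'M_(n, n * n)).
Hypothesis DE : forall k i j, D k (mxvec_index i j) = nu (mxvec_index j i) k.

Lemma legtr_in3_assocR_mul (aH : 'M_(m, m)) :
  legtr_in3 (assocR_mx K m n n *m (kronmx 1%:M nu *m (Phi *m kronmx 1%:M aH)))
  = P *m (kronmx aH D *m assocL_mx K m n n).
Proof.
apply/matrixP => I J; case/mxvec_indexP: I => k p; case/mxvec_indexP: J => J1 l3.
case/mxvec_indexP: J1 => j4 l4.
rewrite legtr_in3E assocR_mx_mulmxE kron1l_mulmxE mxE big_mxvec_index.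
under [RHS]eq_bigr => j _ do under eq_bigr => l _ do
  rewrite mulmx_assocL_mxE kronmxE DE legtrE.
rewrite exchange_big /=; apply: eq_bigr => l _.
by rewrite mulmx_kron1lE mulr_sumr; apply: eq_bigr => j _; ring.
Qed.

Lemma legtr_in3_twist2 :
  legtr_in3 (kronmx Phi 1%:M *m (assocR_mx K n m n *m (kronmx 1%:M Phi
                 *m (assocL_mx K n n m *m kronmx nu (1%:M : 'M_(m, m))))))
  = kronmx D 1%:M *m (assocR_mx K n n m *m (kronmx 1%:M P
                 *m (assocL_mx K n m n *m kronmx P (1%:M : 'M_(n, n))))).
Proof.
apply/matrixP => I J; case/mxvec_indexP: I => k p; case/mxvec_indexP: J => J1 l3.
case/mxvec_indexP: J1 => j4 l4.
rewrite legtr_in3E kron1r_mulmxE kron1r_mulmxE !big_mxvec_index.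
under eq_bigr => a _ do under eq_bigr => b _ do
  rewrite assocR_mx_mulmxE kron1l_mulmxE big_mxvec_index.
under eq_bigr => a _ do under eq_bigr => b _ do under eq_bigr => c _ do
  under eq_bigr => d _ do rewrite assocL_mx_mulmxE kronmxE.
under eq_bigr => a _ do under eq_bigr => b _ do under eq_bigr => c _ do
  rewrite sum_mulr_id_r.
under [RHS]eq_bigr => i _ do under eq_bigr => j _ do
  rewrite assocR_mx_mulmxE kron1l_mulmxE big_mxvec_index.
under [RHS]eq_bigr => i _ do under eq_bigr => j _ do under eq_bigr => c _ do
  under eq_bigr => d _ do rewrite assocL_mx_mulmxE kronmxE.
under [RHS]eq_bigr => i _ do under eq_bigr => j _ do under eq_bigr => c _ do
  rewrite sum_mulr_id_r.
under [RHS]eq_bigr => i _ do under eq_bigr => j _ do rewrite DE mulr_sumr.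
under [RHS]eq_bigr => i _ do under eq_bigr => j _ do under eq_bigr => c _ do
  rewrite !legtrE.
rewrite [RHS]exchange_big /=; apply: eq_bigr => a _.
rewrite [RHS]exchange_big /=; apply: eq_bigr => b _.
by rewrite mulr_sumr; apply: eq_bigr => c _; ring.
Qed.

End TwistIdentities.

Section DualHomCoalgebra.
Variable K : fieldType.
Local Notation V n := 'rV[K]_n.
Local Notation bvec := (bvec K).

Lemma dual_alphaE n (aA : 'M[K]_n) f : dual_alpha aA f = f *m invmx aA^T.
Proof.
apply/rowP => i; rewrite -trmx_inv !mxE; apply: eq_bigr => k _.
by rewrite bvec_mulmx mxE.
Qed.

Lemma dual_Delta_is_linear n (mu : 'M[K]_(n * n, n)) aA : linear (dual_Delta mu aA).
Proof.
move=> c x y; apply/rowP => I; case/mxvec_indexP: I => i j.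
rewrite !mxE !mxvecE !mxE /evd mulr_sumr -big_split; apply: eq_bigr => k _.
by rewrite !mxE mulrDl mulrA.
Qed.
HB.instance Definition _ n mu aA :=
  GRing.isLinear.Build K (V n) (V (n * n)) *:%R (@dual_Delta K n mu aA)
    (@dual_Delta_is_linear n mu aA).

Definition dual_Delta_mx n (mu : 'M[K]_(n * n, n)) aA := lin1_mx (dual_Delta mu aA).

Lemma dual_Delta_mulmx n (mu : 'M[K]_(n * n, n)) aA f :
  dual_Delta mu aA f = f *m dual_Delta_mx mu aA.
Proof. by rewrite mul_rV_lin1. Qed.

Lemma dual_Delta_mxE n (mu : 'M[K]_(n * n, n)) aA k i j :
  dual_Delta_mx mu aA k (mxvec_index i j)
  = (mu *m invmx aA *m invmx aA) (mxvec_index j i) k.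
Proof.
rewrite mxE mxvecE mxE -/(bvec k) evd_bvec_l /hmul tens_bvec.
by rewrite -!mulmxA bvec_mulmx !mulmxA.
Qed.

Lemma dual_twist_legtr n m (phi : 'M[K]_(n * m, m * n)) (Phi : 'M[K]_(m * n, n * m)) :
  (forall (f a : V n) (h : V m),
      lcontract (evd f) (tens h a *m Phi) = rcontract (fun g => evd g a) (tens f h *m phi)) ->
  phi = legtr Phi.
Proof.
move=> C; apply/matrixP => I J; case/mxvec_indexP: I => k p; case/mxvec_indexP: J => j l.
have := congr1 (fun v : V m => v 0 j) (C (bvec k) (bvec l) (bvec p)).
rewrite legtrE lcontractE rcontractE !tens_bvec.
rewrite (eq_bigr (fun i => Phi (mxvec_index p l) (mxvec_index i j) * (i == k)%:R)); last first.
  by move=> i _; rewrite /coef2 bvec_mulmx evd_bvec_r bvecE eq_sym.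
rewrite sum_delta_r => ->.
rewrite (eq_bigr (fun i => phi (mxvec_index k p) (mxvec_index j i) * (i == l)%:R)) ?sum_delta_r //.
by move=> i _; rewrite /coef2 bvec_mulmx evd_bvec_l bvecE eq_sym.
Qed.

End DualHomCoalgebra.

Section UnitMatrices.
Variable K : fieldType.
Local Notation "''M_' ( a , b )" := 'M[K]_(a, b) : type_scope.

Lemma mulmx_unitP n p (U : 'M_(n, n)) (X : 'M_(p, n)) Y :
  U \in unitmx -> X *m U = Y <-> X = Y *m invmx U.
Proof. by move=> uU; split=> [<-|->]; rewrite ?mulmxK ?mulmxKV. Qed.

Lemma unit_mulmxP n p (U : 'M_(n, n)) (X : 'M_(n, p)) Y :
  U \in unitmx -> U *m X = Y <-> X = invmx U *m Y.
Proof. by move=> uU; split=> [<-|->]; rewrite ?mulKmx ?mulKVmx. Qed.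

Lemma mulmx_unit_cancel n p (U : 'M_(n, n)) (X Y : 'M_(p, n)) :
  U \in unitmx -> X *m U = Y *m U <-> X = Y.
Proof. by move=> uU; split=> [/(can_inj (mulmxK uU)) | ->]. Qed.

Lemma unit_mulmx_cancel n p (U : 'M_(n, n)) (X Y : 'M_(n, p)) :
  U \in unitmx -> U *m X = U *m Y <-> X = Y.
Proof. by move=> uU; split=> [/(can_inj (mulKmx uU)) | ->]. Qed.

Lemma unit_conjmxP n p (U : 'M_(n, n)) (W : 'M_(p, p)) X Y :
  U \in unitmx -> W \in unitmx -> U *m X = Y *m W <-> X *m invmx W = invmx U *m Y.
Proof.
move=> uU uW; rewrite (unit_mulmxP _ _ uU) mulmx_unitP ?unitmx_inv //.
by rewrite invmxK mulmxA.
Qed.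

Lemma kronmx_mulV n m (A : 'M_(n, n)) (B : 'M_(m, m)) :
  A \in unitmx -> B \in unitmx -> kronmx A B *m kronmx (invmx A) (invmx B) = 1%:M.
Proof. by move=> uA uB; rewrite kronmx_mul !mulmxV // kronmx1. Qed.

Lemma kronmx_unit n m (A : 'M_(n, n)) (B : 'M_(m, m)) :
  A \in unitmx -> B \in unitmx -> kronmx A B \in unitmx.
Proof. by move=> uA uB; case: (mulmx1_unit (kronmx_mulV uA uB)). Qed.

Lemma invmx_kronmx n m (A : 'M_(n, n)) (B : 'M_(m, m)) :
  A \in unitmx -> B \in unitmx -> invmx (kronmx A B) = kronmx (invmx A) (invmx B).
Proof.
move=> uA uB.
by rewrite -[LHS]mulmx1 -(kronmx_mulV uA uB) mulKmx ?kronmx_unit.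
Qed.

End UnitMatrices.

Section HomCotwistor.
Variable K : fieldType.
Local Notation V n := 'rV[K]_n.
Local Notation "''M_' ( a , b )" := 'M[K]_(a, b) : type_scope.
Variables (n m : nat) (mu : 'M_(n * n, n)) (one : V n) (aA : 'M_(n, n))
    (aH : 'M_(m, m)) (DH : 'M_(m, m * m)) (eH : 'cV[K]_m)
    (phi : 'M_(n * m, m * n)) (Phi : 'M_(m * n, n * m)).
Local Notation aT := (invmx aA^T).
Local Notation DA := (dual_Delta_mx mu aA).
Local Notation L := (assocL_mx K).
Local Notation R := (assocR_mx K).

Lemma twist_alpha_mxP :
  (forall x : V (m * n),
     tmap (mxf aA) (mxf aH) (x *m Phi) = tmap (mxf aH) (mxf aA) x *m Phi)
  <-> Phi *m kronmx aA aH = kronmx aH aA *m Phi.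
Proof.
apply: iff_trans (rV_mulmxP _ _).
by split=> H x; have := H x; rewrite !tmap_kronmx !mulmxA.
Qed.

Lemma twist_mul_mxP :
  (forall (h : V m) (a b : V n),
     tmap (mxf mu) (mxf aH)
       (assocL (tmap (@id (V n)) (mxf Phi)
          (assocR (tmap (mxf Phi) (@id (V n)) (tens (tens h a) b)))))
     = tens (h *m aH) (hmul mu a b) *m Phi)
  <-> kronmx Phi 1%:M *m R n m n *m kronmx 1%:M Phi *m L n n m *m kronmx mu aH
      = R m n n *m kronmx aH mu *m Phi.
Proof.
apply: iff_trans (tens3l_mulmxP _ _); split=> H h a b; have := H h a b;
by rewrite tmap_idr tmap_idl !tmap_kronmx assocR_mulmx assocL_mulmx /hmul tens_mulmx
  -assocR_tens assocR_mulmx !mulmxA.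
Qed.

Lemma twist_comul_mxP :
  (forall (h : V m) (a : V n),
     tmap (mxf Phi) (@id (V m))
       (assocL (tmap (@id (V m)) (mxf Phi) (assocR (tens (h *m DH) (a *m aA)))))
     = assocL (tmap (mxf aA) (mxf DH) (tens h a *m Phi)))
  <-> kronmx DH aA *m R m m n *m kronmx 1%:M Phi *m L m n m *m kronmx Phi 1%:M
      = Phi *m kronmx aA DH *m L n m m.
Proof.
apply: iff_trans (tens_mulmxP _ _); split=> H h a; have := H h a;
by rewrite tmap_idr tmap_idl !tmap_kronmx assocR_mulmx !assocL_mulmx tens_mulmx !mulmxA.
Qed.

Lemma twist_counit_mxP :
  (forall (h : V m) (a : V n), rcontract (cvfun eH) (tens h a *m Phi) = cvfun eH h *: a)
  <-> Phi *m rcontract_mx n (cvfun eH) = lcontract_mx n (cvfun eH).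
Proof.
apply: iff_trans (tens_mulmxP _ _); split=> H h a; have := H h a;
by rewrite -(lcontract_tens _ _ (cvfun_expands eH)) rcontract_mulmx lcontract_mulmx mulmxA.
Qed.

Lemma twist_unit_mxP :
  (forall h : V m, tens h one *m Phi = tens one h) <-> tensl_mx m one *m Phi = tensr_mx m one.
Proof.
apply: iff_trans (rV_mulmxP _ _).
by split=> H h; have := H h; rewrite tensl_mulmx tensr_mulmx mulmxA.
Qed.

Lemma tmap_dual_alphal p q (C : 'M_(p, q)) (x : V (n * p)) :
  tmap (dual_alpha aA) (mxf C) x = tmap (mxf aT) (mxf C) x.
Proof. by apply: tmap_ext => // i; rewrite dual_alphaE. Qed.

Lemma tmap_dual_alphar p q (C : 'M_(p, q)) (x : V (p * n)) :
  tmap (mxf C) (dual_alpha aA) x = tmap (mxf C) (mxf aT) x.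
Proof. by apply: tmap_ext => // i; rewrite dual_alphaE. Qed.

Lemma cotwistor_alpha_mxP :
  (forall x, mxf phi (tmap (dual_alpha aA) (mxf aH) x)
             = tmap (mxf aH) (dual_alpha aA) (mxf phi x))
  <-> kronmx aT aH *m phi = phi *m kronmx aH aT.
Proof.
apply: iff_trans (rV_mulmxP _ _); split=> H x; have := H x;
by rewrite /mxf tmap_dual_alphal tmap_dual_alphar !tmap_kronmx !mulmxA.
Qed.

Lemma cotwistor_dual_comul_mxP :
  (forall b h, tmap (mxf phi) (@id (V n))
                 (assocL (tmap (@id (V n)) (mxf phi)
                    (assocR (tens (dual_Delta mu aA b) (mxf aH h)))))
               = assocL (tmap (mxf aH) (dual_Delta mu aA) (mxf phi (tens b h))))
  <-> kronmx DA aH *m R n n m *m kronmx 1%:M phi *m L n m n *m kronmx phi 1%:M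
      = phi *m kronmx aH DA *m L m n n.
Proof.
have E (x : V (m * n)) : tmap (mxf aH) (dual_Delta mu aA) x = tmap (mxf aH) (mxf DA) x.
  by apply: tmap_ext => // i; rewrite dual_Delta_mulmx.
apply: iff_trans (tens_mulmxP _ _); split=> H b h; have := H b h;
by rewrite /mxf E dual_Delta_mulmx tens_mulmx tmap_idr tmap_idl !tmap_kronmx
  assocR_mulmx !assocL_mulmx !mulmxA.
Qed.

Lemma cotwistor_comul_mxP :
  (forall b h, assocL (tmap (@id (V m)) (mxf phi)
                 (assocR (tmap (mxf phi) (@id (V m))
                    (assocL (tens (dual_alpha aA b) (mxf DH h))))))
               = tmap (mxf DH) (dual_alpha aA) (mxf phi (tens b h)))
  <-> kronmx aT DH *m L n m m *m kronmx phi 1%:M *m R m n m *m kronmx 1%:M phi *m L m m n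
      = phi *m kronmx DH aT.
Proof.
apply: iff_trans (tens_mulmxP _ _); split=> H b h; have := H b h;
by rewrite tmap_dual_alphar /mxf dual_alphaE tens_mulmx tmap_idr tmap_idl !tmap_kronmx
  assocR_mulmx !assocL_mulmx !mulmxA.
Qed.

Lemma cotwistor_counit_mxP :
  (forall b h, lcontract (cvfun eH) (mxf phi (tens b h)) = cvfun eH h *: b)
  <-> phi *m lcontract_mx n (cvfun eH) = rcontract_mx n (cvfun eH).
Proof.
apply: iff_trans (tens_mulmxP _ _); split=> H b h; have := H b h;
by rewrite -(rcontract_tens _ _ (cvfun_expands eH)) /mxf rcontract_mulmx lcontract_mulmx mulmxA.
Qed.

Lemma cotwistor_dual_counit_mxP :
  (forall b h, rcontract (dual_eps one) (mxf phi (tens b h)) = dual_eps one b *: h)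
  <-> phi *m rcontract_mx m (dual_eps one) = lcontract_mx m (dual_eps one).
Proof.
apply: iff_trans (tens_mulmxP _ _); split=> H b h; have := H b h;
by rewrite -(lcontract_tens _ _ (evd_expands_l one)) /mxf rcontract_mulmx lcontract_mulmx mulmxA.
Qed.

Local Notation P := (legtr Phi).
Hypotheses (uA : aA \in unitmx) (uH : aH \in unitmx).

Lemma legtr_alpha_compat :
  Phi *m kronmx aA aH = kronmx aH aA *m Phi <-> kronmx aT aH *m P = P *m kronmx aH aT.
Proof.
have -> : Phi *m kronmx aA aH = kronmx aH aA *m Phi
      <-> kronmx aA^T 1%:M *m (P *m kronmx aH 1%:M) = kronmx 1%:M aH *m P *m kronmx 1%:M aA^T.
  rewrite mulmxA -legtr_mul_kronmx -[aA in kronmx 1%:M aA^T]trmxK -legtr_kronmx_mul trmxK.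
  by split=> [-> | /legtr_inj].
rewrite unit_conjmxP ?kronmx_unit ?unitmx1 ?unitmx_tr //.
rewrite !invmx_kronmx ?unitmx1 ?unitmx_tr // invmx1.
rewrite -[P *m _ *m _]mulmxA [kronmx aT 1%:M *m _]mulmxA !kronmx_mul !mulmx1 !mul1mx.
by split=> /esym.
Qed.


Lemma legtr_counit_compat (e : V m -> K) :
  Phi *m rcontract_mx n e = lcontract_mx n e <-> P *m lcontract_mx n e = rcontract_mx n e.
Proof.
split=> /matrixP E; apply/matrixP => I k; case/mxvec_indexP: I => i j.
- have := E (mxvec_index j k) i.
  rewrite mulmx_rcontract_mxE lcontract_mxE mulmx_lcontract_mxE rcontract_mxE eq_sym => <-.
  by apply: eq_bigr => j' _; rewrite legtrE.
- have := E (mxvec_index k i) j.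
  rewrite mulmx_rcontract_mxE lcontract_mxE mulmx_lcontract_mxE rcontract_mxE eq_sym => <-.
  by apply: eq_bigr => j' _; rewrite legtrE.
Qed.

Lemma legtr_unit_compat :
  tensl_mx m one *m Phi = tensr_mx m one
  <-> P *m rcontract_mx m (dual_eps one) = lcontract_mx m (dual_eps one).
Proof.
have epsE i : dual_eps one (bvec K i) = one 0 i by rewrite /dual_eps evd_bvec_l.
split=> /matrixP E; apply/matrixP => I k.
- case/mxvec_indexP: I => i j; rewrite mulmx_rcontract_mxE lcontract_mxE epsE.
  have := E j (mxvec_index i k); rewrite tensl_mx_mulmxE tensr_mxE => <-.
  by apply: eq_bigr => l _; rewrite legtrE epsE mulrC.
- case/mxvec_indexP: k => i j.
  have := E (mxvec_index i I) j; rewrite mulmx_rcontract_mxE lcontract_mxE epsE.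
  rewrite tensl_mx_mulmxE tensr_mxE => <-.
  by apply: eq_bigr => l _; rewrite legtrE epsE mulrC.
Qed.


Lemma legtr_comul_compat :
  kronmx DH aA *m R m m n *m kronmx 1%:M Phi *m L m n m *m kronmx Phi 1%:M
    = Phi *m kronmx aA DH *m L n m m
  <-> kronmx aT DH *m L n m m *m kronmx P 1%:M *m R m n m *m kronmx 1%:M P *m L m m n
    = P *m kronmx DH aT.
Proof.
set Ec := kronmx DH 1%:M *m (R m m n *m (kronmx 1%:M Phi *m (L m n m *m kronmx Phi 1%:M))).
set Yc := Phi *m (kronmx 1%:M DH *m L n m m).
have -> : kronmx DH aA *m R m m n *m kronmx 1%:M Phi *m L m n m *m kronmx Phi 1%:M
          = kronmx 1%:M aA *m Ec.
  by rewrite /Ec !mulmxA kronmx_mul mul1mx mulmx1.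
have -> : Phi *m kronmx aA DH *m L n m m = Yc *m kronmx (kronmx aA 1%:M) (1%:M : 'M_(m, m)).
  rewrite /Yc -!mulmxA assocL_mx_kronmx kronmx1 [kronmx 1%:M DH *m _]mulmxA.
  by rewrite kronmx_mul mul1mx mulmx1.
have -> : kronmx aT DH *m L n m m *m kronmx P 1%:M *m R m n m *m kronmx 1%:M P *m L m m n
          = kronmx aT 1%:M *m legtr_out3 Ec.
  by rewrite legtr_out3_twist2 !mulmxA kronmx_mul mul1mx mulmx1.
have -> : P *m kronmx DH aT = legtr_out3 Yc *m kronmx 1%:M aT.
  by rewrite legtr_out3_mul_assocL -mulmxA kronmx_mul mul1mx mulmx1.
have -> : kronmx 1%:M aA *m Ec = Yc *m kronmx (kronmx aA 1%:M) 1%:M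
      <-> kronmx aA^T 1%:M *m legtr_out3 Yc = legtr_out3 Ec *m kronmx 1%:M aA^T.
  rewrite -legtr_out3_kron1l_mul -legtr_out3_mul_kron1r.
  by split=> [-> | /esym/legtr_out3_inj].
rewrite unit_conjmxP ?kronmx_unit ?unitmx1 ?unitmx_tr //.
rewrite !invmx_kronmx ?unitmx1 ?unitmx_tr // !invmx1.
by split=> /esym.
Qed.


Section TwistCommutesWithAlpha.
Hypothesis E0 : Phi *m kronmx aA aH = kronmx aH aA *m Phi.
Local Notation a' := (invmx aA).
Local Notation b' := (invmx aH).

Lemma twist_kronmx_invmx : kronmx b' a' *m Phi = Phi *m kronmx a' b'.
Proof.
by have := esym E0; rewrite unit_conjmxP ?kronmx_unit // !invmx_kronmx // => /esym.
Qed.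

Lemma twist_kron1_invmx : kronmx 1%:M a' *m Phi = kronmx aH 1%:M *m Phi *m kronmx a' b'.
Proof.
have -> : kronmx 1%:M a' = kronmx aH 1%:M *m kronmx b' a'.
  by rewrite kronmx_mul mulmxV // mul1mx.
by rewrite -mulmxA twist_kronmx_invmx mulmxA.
Qed.

Lemma twist_kron1_invmx2 :
  kronmx 1%:M (a' *m a') *m Phi = kronmx (aH *m aH) 1%:M *m Phi *m kronmx (a' *m a') (b' *m b').
Proof.
have aH_a' : kronmx 1%:M a' *m kronmx aH 1%:M = kronmx aH 1%:M *m kronmx 1%:M a'.
  by rewrite !kronmx_mul !mul1mx !mulmx1.
rewrite -[1%:M](mulmx1 1%:M) -kronmx_mul -mulmxA twist_kron1_invmx !mulmxA aH_a'.
rewrite -(mulmxA (kronmx aH 1%:M)) twist_kron1_invmx !mulmxA kronmx_mul mulmx1.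
by rewrite -mulmxA kronmx_mul.
Qed.

Lemma twist_dual_mul_form :
  R m n n *m (kronmx 1%:M (mu *m a' *m a') *m (Phi *m kronmx 1%:M aH))
  = kronmx (kronmx aH 1%:M) 1%:M *m (R m n n *m kronmx aH mu *m Phi)
      *m kronmx (a' *m a') b'.
Proof.
rewrite -(mulmxA mu) -[1%:M](mul1mx 1%:M) -kronmx_mul -mulmxA (mulmxA _ Phi).
rewrite twist_kron1_invmx2 !mulmxA -(mulmxA (R m n n)) kronmx_mul mul1mx mulmx1.
have -> : kronmx (aH *m aH) mu = kronmx aH 1%:M *m kronmx aH mu.
  by rewrite kronmx_mul mul1mx.
rewrite mulmxA -(kronmx1 K n n) assocR_mx_kronmx -mulmxA kronmx_mul mulmx1.
by rewrite -(mulmxA b') mulVmx // mulmx1.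
Qed.

Lemma legtr_mul_compat :
  kronmx Phi 1%:M *m R n m n *m kronmx 1%:M Phi *m L n n m *m kronmx mu aH
    = R m n n *m kronmx aH mu *m Phi
  <-> kronmx DA aH *m R n n m *m kronmx 1%:M P *m L n m n *m kronmx P 1%:M
    = P *m kronmx aH DA *m L m n n.
Proof.
pose T := kronmx Phi 1%:M *m (R n m n *m (kronmx 1%:M Phi *m (L n n m *m kronmx mu 1%:M))).
set W := R m n n *m kronmx aH mu *m Phi.
pose Kb := kronmx (kronmx aH (1%:M : 'M_(n, n))) (1%:M : 'M_(n, n)).
have uKb : Kb \in unitmx by rewrite !kronmx_unit ?unitmx1.
have ua2 : kronmx (a' *m a') (1%:M : 'M_(m, m)) \in unitmx.
  by rewrite kronmx_unit ?unitmx1 ?unitmx_mul ?unitmx_inv ?uA.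
have -> : kronmx Phi 1%:M *m R n m n *m kronmx 1%:M Phi *m L n n m *m kronmx mu aH
          = T *m kronmx 1%:M aH.
  by rewrite /T !mulmxA -[RHS]mulmxA kronmx_mul mulmx1 mul1mx.
have -> : kronmx DA aH *m R n n m *m kronmx 1%:M P *m L n m n *m kronmx P 1%:M
          = legtr_in3 (Kb *m (T *m kronmx (a' *m a') 1%:M)).
  rewrite /Kb -kron1l_mul_legtr_in3 /T -!mulmxA kronmx_mul mulmx1 [mu *m _]mulmxA.
  by rewrite (legtr_in3_twist2 Phi (dual_Delta_mxE mu aA)) !mulmxA kronmx_mul mul1mx mulmx1.
have -> : P *m kronmx aH DA *m L m n n = legtr_in3 (Kb *m W *m kronmx (a' *m a') b').
  by rewrite /Kb -twist_dual_mul_form (legtr_in3_assocR_mul Phi (dual_Delta_mxE mu aA)) mulmxA.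
have -> : kronmx (a' *m a') b' = kronmx 1%:M b' *m kronmx (a' *m a') 1%:M.
  by rewrite kronmx_mul mul1mx mulmx1.
transitivity (Kb *m (T *m kronmx (a' *m a') 1%:M)
              = Kb *m W *m (kronmx 1%:M b' *m kronmx (a' *m a') 1%:M)); last first.
  by split=> [-> | /legtr_in3_inj].
rewrite -mulmxA unit_mulmx_cancel // mulmxA mulmx_unit_cancel //.
by rewrite mulmx_unitP ?kronmx_unit ?unitmx1 // invmx_kronmx ?unitmx1 // invmx1.
Qed.

End TwistCommutesWithAlpha.

End HomCotwistor.

Theorem theorem5p1 (K : fieldType) (n m : nat)
    (mu : 'M[K]_(n * n, n)) (one : 'rV[K]_n) (aA : 'M[K]_n)
    (aH : 'M[K]_m) (DH : 'M[K]_(m, m * m)) (eH : 'cV[K]_m)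
    (phi : 'M[K]_(n * m, m * n)) (Phi : 'M[K]_(m * n, n * m)) :
  [pchar K] =i pred0 ->
  aA \in unitmx -> aH \in unitmx ->
  is_hom_algebra mu one aA ->
  is_hom_coalgebra (mxf aH) (mxf DH) (cvfun eH) ->
  (forall (f a : 'rV[K]_n) (h : 'rV[K]_m),
      lcontract (evd f) (tens h a *m Phi)
      = rcontract (fun g => evd g a) (tens f h *m phi)) ->
  is_hom_cotwistor (dual_alpha aA) (dual_Delta mu aA) (dual_eps one)
                   (mxf aH) (mxf DH) (cvfun eH) (mxf phi)
  <->
  [/\ forall x : 'rV[K]_(m * n),
        tmap (mxf aA) (mxf aH) (x *m Phi) = tmap (mxf aH) (mxf aA) x *m Phi,
      (* E1 *)
      forall (h : 'rV[K]_m) (a b : 'rV[K]_n),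
        tmap (mxf mu) (mxf aH)
          (assocL (tmap (@id 'rV[K]_n) (mxf Phi)
             (assocR (tmap (mxf Phi) (@id 'rV[K]_n) (tens (tens h a) b)))))
        = tens (h *m aH) (hmul mu a b) *m Phi,
      (* E2 *)
      forall (h : 'rV[K]_m) (a : 'rV[K]_n),
        tmap (mxf Phi) (@id 'rV[K]_m)
          (assocL (tmap (@id 'rV[K]_m) (mxf Phi) (assocR (tens (h *m DH) (a *m aA)))))
        = assocL (tmap (mxf aA) (mxf DH) (tens h a *m Phi)),
      (* E3 *)
      forall (h : 'rV[K]_m) (a : 'rV[K]_n),
        rcontract (cvfun eH) (tens h a *m Phi) = cvfun eH h *: a &
      (* E4 *)
      forall h : 'rV[K]_m, tens h one *m Phi = tens one h].
Proof.
move=> _ uA uH _ _ corr; rewrite (dual_twist_legtr corr).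
have alphaP := legtr_alpha_compat aH Phi uA.
split=> [[m0 m1 m2 m3 m4] | [e0 e1 e2 e3 e4]].
- have E0 : Phi *m kronmx aA aH = kronmx aH aA *m Phi.
    by apply/alphaP/cotwistor_alpha_mxP.
  split.
  + exact/twist_alpha_mxP.
  + by apply/twist_mul_mxP/(legtr_mul_compat mu uA uH E0)/cotwistor_dual_comul_mxP.
  + by apply/twist_comul_mxP/(legtr_comul_compat DH Phi uA)/cotwistor_comul_mxP.
  + by apply/twist_counit_mxP/legtr_counit_compat/cotwistor_counit_mxP.
  + by apply/twist_unit_mxP/legtr_unit_compat/cotwistor_dual_counit_mxP.
- have E0 : Phi *m kronmx aA aH = kronmx aH aA *m Phi by apply/twist_alpha_mxP.
  split.
  + by apply/cotwistor_alpha_mxP/alphaP.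
  + by apply/cotwistor_dual_comul_mxP/(legtr_mul_compat mu uA uH E0)/twist_mul_mxP.
  + by apply/cotwistor_comul_mxP/(legtr_comul_compat DH Phi uA)/twist_comul_mxP.
  + by apply/cotwistor_counit_mxP/legtr_counit_compat/twist_counit_mxP.
  + by apply/cotwistor_dual_counit_mxP/legtr_unit_compat/twist_unit_mxP.
Qed.
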